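(* Consider a no-slip billiard in the upper half-plane $\{z\ge 0\}$ in which a disk-shaped particle of negligible (but nonzero) radius with rotationally symmetric mass distribution constant $\gamma\ge 0$ moves under a constant force $\mathbf g=(0,0,-g)$, $g>0$, between collisions and collides with the line $z=0$ according to the no-slip law. Let $\mathbf q_n=(x_n,y_n,z_n)$ and $\mathbf p_n=\dot{\mathbf q}_n$ be the position and velocity immediately after the $n$-th collision ($n=0,1,2,\dots$), with $y_0=0$, $z_0=0$ and $\dot z_0>0$, and suppose $\dot x_0\neq 0$. Define the tangential-rotational ratio $\Delta=\dot y_0/\dot x_0$. Then: (i) the post-collision velocities are $2$-periodic: $\mathbf p_{n+2}=\mathbf p_n$ for all $n\ge 0$; (ii) if $\Delta=\gamma$, the orbit in phase space is $2$-periodic: $(\mathbf q_{n+2},\mathbf p_{n+2})=(\mathbf q_n,\mathbf p_n)$ for all $n\ge 0$; (iii) if $\Delta\neq\gamma$, then after every two collisions the particle undergoes the same nonzero net lateral displacement (a constant drift), and the position is unbounded.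
   Context: State coordinates: $x$ is the normalized rotational coordinate $x=\gamma R\vartheta$ ($R$ the particle radius, $\vartheta$ the rotation angle in radians), $y$ is the coordinate along the boundary line, $z$ the height (inward normal direction). The mass distribution constant is $\gamma=\sqrt{2\lambda}/R$ where $\lambda$ is the second moment of inertia per unit mass ($\gamma=0$ point mass, $\gamma=1/\sqrt2$ uniform disk, $\gamma=1$ ring); with these coordinates the kinetic energy is proportional to $\dot x^2+\dot y^2+\dot z^2$. Write $\gamma=\tan(\beta/2)$. Between collisions the particle moves freely under the force ($\ddot x=\ddot y=0$, $\ddot z=-g$). At a collision with $z=0$ with incoming velocity $(\dot x,\dot y,\dot z)$, the no-slip collision law gives outgoing velocity $(-\cos\beta\,\dot x-\sin\beta\,\dot y,\; -\sin\beta\,\dot x+\cos\beta\,\dot y,\; -\dot z)$ (this fixes the relative orientation convention of the rotational and tangential coordinates). Position $\mathbf q_n$ includes the rotational coordinate $x_n$. *)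

From Stdlib Require Import Reals.
Open Scope R_scope.

(* Phase-space state: position q = (x, y, z) and velocity p = (xdot, ydot, zdot).
   x = gamma * R * theta is the normalized rotational coordinate,
   y the coordinate along the boundary line, z the height. *)
Record state := mkState { qx : R; qy : R; qz : R; px : R; py : R; pz : R }.

(* gamma = tan(beta/2), i.e. beta = 2 atan gamma (beta in [0, pi) for gamma >= 0). *)
Definition beta (gamma : R) : R := 2 * atan gamma.

(* Time of flight from a collision point on z = 0 with upward velocity zdot > 0
   under the force (0,0,-g): first positive root of zdot t - g t^2 / 2 = 0. *)
Definition flight_time (g : R) (s : state) : R := 2 * pz s / g.

Definition step (g gamma : R) (s : state) : state :=
  let t := flight_time g s in
  let b := beta gamma in
  let vx := px s in
  let vy := py s in
  let vz := pz s - g * t in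
  mkState (qx s + px s * t)
          (qy s + py s * t)
          (qz s + pz s * t - g * t ^ 2 / 2)
          (- cos b * vx - sin b * vy)
          (- sin b * vx + cos b * vy)
          (- vz).

(* orbit n = (q_n, p_n): state immediately after the n-th collision. *)
Fixpoint orbit (g gamma : R) (s0 : state) (n : nat) : state :=
  match n with
  | O => s0
  | S m => step g gamma (orbit g gamma s0 m)
  end.

(* The no-slip collision acts on the velocity p = (xdot, ydot) as the reflection
   R = [[-cos b, -sin b], [-sin b, cos b]], b = 2 atan gamma, and reverses zdot;
   so the velocities are 2-periodic and every flight lasts the same time
   T = 2 zdot_0 / g.  The reflection fixes the component of the velocity
   along its mirror line, spanned by (gamma, -1); this component is
   proportional to ydot_0 - gamma xdot_0.  Over two flights the particle is
   displaced by T (p + R p), twice the projection of p onto the mirror line: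
   it vanishes exactly when Delta = gamma, and otherwise is a constant
   nonzero drift in y. *)

From Stdlib Require Import Reals Lra Lia.
Open Scope R_scope.

Lemma state_ext (a b : state) :
  qx a = qx b -> qy a = qy b -> qz a = qz b ->
  px a = px b -> py a = py b -> pz a = pz b -> a = b.
Proof. destruct a, b; simpl; intros; subst; reflexivity. Qed.

Lemma sin_atan_cos (x : R) : sin (atan x) = x * cos (atan x).
Proof.
  rewrite sin_atan, cos_atan.
  assert (0 < sqrt (1 + x²)) by (apply sqrt_lt_R0; unfold Rsqr; nra).
  field; lra.
Qed.

Lemma cos_atan_sqr (x : R) : cos (atan x) ^ 2 * (1 + x ^ 2) = 1.
Proof.
  pose proof (sin2_cos2 (atan x)) as E; unfold Rsqr in E.
  rewrite sin_atan_cos in E; lra.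
Qed.

Lemma cos_atan_gt0 (x : R) : 0 < cos (atan x).
Proof. destruct (atan_bound x); apply cos_gt_0; lra. Qed.

Lemma arith_progression2_unbounded (u : nat -> R) (d : R) :
  d <> 0 -> (forall n, u (n + 2)%nat = u n + d) ->
  ~ (exists M, forall n, Rabs (u n) <= M).
Proof.
  intros Hd Hu [M HM].
  assert (Heven : forall k, u (2 * k)%nat = u 0%nat + INR k * d).
  { induction k as [|k IH]; [simpl; ring|].
    replace (2 * S k)%nat with (2 * k + 2)%nat by lia.
    rewrite Hu, IH, S_INR; ring. }
  destruct (INR_archimed (Rabs d) (2 * M) (Rabs_pos_lt d Hd)) as [k Hk].
  pose proof (HM 0%nat) as Hstart; pose proof (HM (2 * k)%nat) as Hend.
  rewrite Heven in Hend.
  pose proof (Rabs_triang (u 0%nat + INR k * d) (- u 0%nat)) as Htri.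
  replace (u 0%nat + INR k * d + - u 0%nat) with (INR k * d) in Htri by ring.
  rewrite Rabs_mult, Rabs_Ropp, (Rabs_pos_eq (INR k)) in Htri by apply pos_INR.
  lra.
Qed.

Section NoSlipBilliard.

Variables g gamma : R.
Hypothesis g_gt0 : 0 < g.

Notation step := (step g gamma).
Notation orbit := (orbit g gamma).

Definition mismatch (st : state) : R := py st - gamma * px st.

Lemma div_eq_iff_mismatch_eq0 (st : state) :
  px st <> 0 -> py st / px st = gamma <-> mismatch st = 0.
Proof.
  intros Hpx; unfold mismatch; split; intros H.
  - rewrite <- H; field; exact Hpx.
  - replace (py st) with (gamma * px st) by lra; field; exact Hpx.
Qed.

Lemma step_pz (st : state) : pz (step st) = pz st.
Proof. unfold step, flight_time; simpl; field; lra. Qed.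

Lemma step_qz (st : state) : qz (step st) = qz st.
Proof. unfold step, flight_time; simpl; field; lra. Qed.

Lemma step_qx (st : state) : qx (step st) = qx st + px st * flight_time g st.
Proof. reflexivity. Qed.

Lemma step_qy (st : state) : qy (step st) = qy st + py st * flight_time g st.
Proof. reflexivity. Qed.

Lemma step_step_px (st : state) : px (step (step st)) = px st.
Proof.
  simpl; pose proof (sin2_cos2 (beta gamma)) as E; unfold Rsqr in E.
  transitivity ((sin (beta gamma) * sin (beta gamma)
                 + cos (beta gamma) * cos (beta gamma)) * px st); [ring|].
  rewrite E; ring.
Qed.

Lemma step_step_py (st : state) : py (step (step st)) = py st.
Proof.
  simpl; pose proof (sin2_cos2 (beta gamma)) as E; unfold Rsqr in E.
  transitivity ((sin (beta gamma) * sin (beta gamma)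
                 + cos (beta gamma) * cos (beta gamma)) * py st); [ring|].
  rewrite E; ring.
Qed.

Lemma px_add_step (st : state) :
  px st + px (step st) = - 2 * gamma * cos (atan gamma) ^ 2 * mismatch st.
Proof.
  unfold mismatch; simpl; unfold beta.
  rewrite sin_2a, cos_2a_sin, !sin_atan_cos; ring.
Qed.

Lemma py_add_step (st : state) :
  py st + py (step st) = 2 * cos (atan gamma) ^ 2 * mismatch st.
Proof.
  unfold mismatch; simpl; unfold beta.
  rewrite sin_2a, cos_2a_cos, !sin_atan_cos; ring.
Qed.

Lemma mismatch_step (st : state) : mismatch (step st) = mismatch st.
Proof.
  unfold mismatch; simpl; unfold beta.
  rewrite sin_2a, cos_2a_sin, !sin_atan_cos.
  transitivity (py st - gamma * px st + 2 * gamma * px st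
                * (1 - cos (atan gamma) ^ 2 * (1 + gamma ^ 2))); [ring|].
  rewrite cos_atan_sqr; ring.
Qed.

Lemma orbit_S (s0 : state) (n : nat) : orbit s0 (S n) = step (orbit s0 n).
Proof. reflexivity. Qed.

Lemma orbit_add2 (s0 : state) (n : nat) :
  orbit s0 (n + 2) = step (step (orbit s0 n)).
Proof. now replace (n + 2)%nat with (S (S n)) by lia. Qed.

Lemma orbit_pz (s0 : state) (n : nat) : pz (orbit s0 n) = pz s0.
Proof. induction n as [|n IH]; [reflexivity|]; rewrite orbit_S, step_pz; exact IH. Qed.

Lemma orbit_qz (s0 : state) (n : nat) : qz (orbit s0 n) = qz s0.
Proof. induction n as [|n IH]; [reflexivity|]; rewrite orbit_S, step_qz; exact IH. Qed.

Lemma orbit_mismatch (s0 : state) (n : nat) : mismatch (orbit s0 n) = mismatch s0.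
Proof.
  induction n as [|n IH]; [reflexivity|]; rewrite orbit_S, mismatch_step; exact IH.
Qed.

Lemma orbit_flight_time (s0 : state) (n : nat) :
  flight_time g (orbit s0 n) = flight_time g s0.
Proof. unfold flight_time; rewrite orbit_pz; reflexivity. Qed.

Lemma orbit_velocity_add2 (s0 : state) (n : nat) :
  px (orbit s0 (n + 2)) = px (orbit s0 n) /\
  py (orbit s0 (n + 2)) = py (orbit s0 n) /\
  pz (orbit s0 (n + 2)) = pz (orbit s0 n).
Proof.
  rewrite orbit_add2, step_step_px, step_step_py, !step_pz; repeat split.
Qed.

Definition drift_x (s0 : state) : R :=
  flight_time g s0 * (- 2 * gamma * cos (atan gamma) ^ 2 * mismatch s0).

Definition drift_y (s0 : state) : R :=
  flight_time g s0 * (2 * cos (atan gamma) ^ 2 * mismatch s0).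

Lemma orbit_qx_add2 (s0 : state) (n : nat) :
  qx (orbit s0 (n + 2)) = qx (orbit s0 n) + drift_x s0.
Proof.
  unfold drift_x.
  rewrite orbit_add2, !step_qx, <- (orbit_mismatch s0 n), <- px_add_step.
  rewrite <- orbit_S, !orbit_flight_time; ring.
Qed.

Lemma orbit_qy_add2 (s0 : state) (n : nat) :
  qy (orbit s0 (n + 2)) = qy (orbit s0 n) + drift_y s0.
Proof.
  unfold drift_y.
  rewrite orbit_add2, !step_qy, <- (orbit_mismatch s0 n), <- py_add_step.
  rewrite <- orbit_S, !orbit_flight_time; ring.
Qed.

Lemma orbit_add2_mismatch_eq0 (s0 : state) (n : nat) :
  mismatch s0 = 0 -> orbit s0 (n + 2) = orbit s0 n.
Proof.
  intros Hm; destruct (orbit_velocity_add2 s0 n) as (Hx & Hy & Hz).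
  apply state_ext; try assumption.
  - rewrite orbit_qx_add2; unfold drift_x; rewrite Hm; ring.
  - rewrite orbit_qy_add2; unfold drift_y; rewrite Hm; ring.
  - rewrite !orbit_qz; reflexivity.
Qed.

Lemma drift_y_neq0 (s0 : state) :
  0 < pz s0 -> mismatch s0 <> 0 -> drift_y s0 <> 0.
Proof.
  intros Hpz Hm; unfold drift_y.
  assert (0 < flight_time g s0) by (unfold flight_time; apply Rdiv_lt_0_compat; lra).
  pose proof (cos_atan_gt0 gamma).
  apply Rmult_integral_contrapositive_currified; [lra|].
  apply Rmult_integral_contrapositive_currified; [|exact Hm].
  apply Rmult_integral_contrapositive_currified; [lra|].
  apply pow_nonzero; lra.
Qed.

End NoSlipBilliard.

Theorem theorem1 (g gamma : R) (s0 : state) :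
  0 < g -> 0 <= gamma ->
  qy s0 = 0 -> qz s0 = 0 -> 0 < pz s0 -> px s0 <> 0 ->
  let Delta := py s0 / px s0 in
  (* (i) post-collision velocities are 2-periodic *)
  (forall n : nat,
      px (orbit g gamma s0 (n + 2)) = px (orbit g gamma s0 n) /\
      py (orbit g gamma s0 (n + 2)) = py (orbit g gamma s0 n) /\
      pz (orbit g gamma s0 (n + 2)) = pz (orbit g gamma s0 n)) /\
  (* (ii) Delta = gamma: the phase-space orbit is 2-periodic *)
  (Delta = gamma -> forall n : nat, orbit g gamma s0 (n + 2) = orbit g gamma s0 n) /\
  (* (iii) Delta <> gamma: constant nonzero lateral drift every two collisions,
     and unbounded position *)
  (Delta <> gamma ->
     (exists dx dy dz : R, dy <> 0 /\
        forall n : nat,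
          qx (orbit g gamma s0 (n + 2)) = qx (orbit g gamma s0 n) + dx /\
          qy (orbit g gamma s0 (n + 2)) = qy (orbit g gamma s0 n) + dy /\
          qz (orbit g gamma s0 (n + 2)) = qz (orbit g gamma s0 n) + dz) /\
     ~ (exists M : R, forall n : nat,
          Rabs (qx (orbit g gamma s0 n)) <= M /\
          Rabs (qy (orbit g gamma s0 n)) <= M /\
          Rabs (qz (orbit g gamma s0 n)) <= M)).
Proof.
  (* Neither the sign of gamma nor the initial position plays any role. *)
  intros Hg _ _ _ Hpz Hpx Delta.
  split; [exact (orbit_velocity_add2 g gamma Hg s0) | split].
  - intros HD n; apply orbit_add2_mismatch_eq0; [exact Hg|].
    apply div_eq_iff_mismatch_eq0; assumption.
  - intros HD.
    assert (Hm : mismatch gamma s0 <> 0)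
      by (intro H; apply HD, div_eq_iff_mismatch_eq0; assumption).
    pose proof (drift_y_neq0 g gamma Hg s0 Hpz Hm) as Hdy.
    split.
    + exists (drift_x g gamma s0), (drift_y g gamma s0), 0; split; [exact Hdy|].
      intro n; rewrite orbit_qx_add2, orbit_qy_add2, !orbit_qz by exact Hg.
      repeat split; ring.
    + intros [M HM].
      apply (arith_progression2_unbounded _ _ Hdy (orbit_qy_add2 g gamma Hg s0)).
      exists M; intro n; apply HM.
Qed.
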